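(* Let $G$ be a strategic game with players $1,\dots,n$ and let $\phi=(\phi_1,\dots,\phi_n)$ be a sequence in which each $\phi_i$ is a positive optimality condition for player $i$. Then the $\mathcal{L}_\nu$-formula $$(\mathit{rat}_\phi \wedge \Box^*\mathit{rat}_\phi)\rightarrow \nu X.\,O_\phi X$$ is a theorem of the proof system $\mathbf{P}$.
   Context: Strategic game: $G=(T_1,\dots,T_n,<_1,\dots,<_n)$ where $T_i$ is an arbitrary nonempty (possibly infinite) set of strategies of player $i$, and $<_i$ is a total linear order on $T=\prod_{i=1}^n T_i$; $\ge_i$ is its reflexive closure. For a profile $s$ write $s_{-i}$ for $(s_j)_{j\neq i}$ and $(s_i,t_{-i})$ for the profile agreeing with $t$ except in coordinate $i$, where it is $s_i$. A restriction of $G$ is $S=(S_1,\dots,S_n)$ with $S_i\subseteq T_i$. Language $\mathcal{L}_O$: first-order formulas built from atoms $C(a)$ and $a\ge^i_c b$ ($i\in[1..n]$, $a,b,c$ variables or the constant $o$) using $\neg,\wedge,\exists x$. An optimality model is $(G,G',s)$ with $G'$ a restriction and $s\in T$; an assignment $\alpha$ maps variables to $T$ and $o$ to $s$; $(G,G',s)\models_\alpha C(x)$ iff $\alpha(x)_j\in G'_j$ for all $j$; $(G,G',s)\models_\alpha x\ge^i_z y$ iff $(\alpha(x)_i,\alpha(z)_{-i})\ge_i(\alpha(y)_i,\alpha(z)_{-i})$; other connectives as usual. An optimality condition for player $i$ is a closed $\mathcal{L}_O$-formula all of whose atoms of the form $a\ge^j_c b$ have $j=i$; it is positive if every occurrence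 of an atom $C(\cdot)$ lies under an even number of negations. For $s_i\in T_i$ and restriction $S$, $\phi_i(s_i,S)$ means $(G,S,s)\models\phi_i$ for a profile $s$ with $i$-th component $s_i$ (the other components are irrelevant). Belief model for $G$: $(\Omega,\bar s_1,\dots,\bar s_n,P_1,\dots,P_n)$ with $\Omega\neq\emptyset$, $\bar s_i:\Omega\to T_i$, $P_i:\Omega\to 2^\Omega$; $\bar s(\omega)=(\bar s_1(\omega),\dots,\bar s_n(\omega))$. For $E\subseteq\Omega$, $G_E$ is the restriction with $(G_E)_i=\{\bar s_i(u):u\in E\}$. Language $\mathcal{L}_\nu$ (one set variable $X$): $\psi::=\mathit{rat}_{\phi_i}\mid X\mid \psi\wedge\psi\mid\neg\psi\mid\Box_i\psi\mid O_{\phi_i}\psi\mid\nu X.\psi$, with $\phi_i$ an optimality condition for player $i$ and, in $\nu X.\psi$, $\psi$ containing no $\nu$. Abbreviations: $\mathit{rat}_\phi=\bigwedge_i\mathit{rat}_{\phi_i}$, $\Box\psi=\bigwedge_i\Box_i\psi$, $O_\phi\psi=\bigwedge_i O_{\phi_i}\psi$, $\rightarrow$ as usual, and $\Box^*\psi:=\nu X.\Box(X\wedge\psi)$. A formula is positive in $X$ if each occurrence of $X$ is under an even number of negations and lies in the scope of $O_{\phi_i}$ only when $\phi_i$ is positive. $\psi[X\mapsto\chi]$ denotes substitution of $\chi$ for each occurrence of $X$. Proof system $\mathbf{P}$: standard propositional reasoning (all propositional tautologies and modus ponens), plus, for positive optimality conditions $\phi_i$ and $\psi$ positive in $X$: axiom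 ($\mathit{rat}Dis$): $\mathit{rat}_\phi\rightarrow(\Box\chi\rightarrow O_\phi\chi)$; axiom ($\nu Dis$): $\nu X.\psi\rightarrow\psi[X\mapsto\nu X.\psi]$; rule ($\nu Ind$): from $\chi\rightarrow\psi[X\mapsto\chi]$ infer $\chi\rightarrow\nu X.\psi$. *)

From Stdlib Require Import Arith List Bool.
Import ListNotations.

Definition player (n i : nat) : Prop := 1 <= i <= n.

Definition profile (n : nat) (T : nat -> Type) : Type :=
  forall i : nat, player n i -> T i.

Record game (n : nat) : Type := {
  strat : nat -> Type;
  strat_nonempty : forall i, player n i -> inhabited (strat i);
  pref : nat -> profile n strat -> profile n strat -> Prop;
  pref_irrefl : forall i, player n i -> forall s, ~ pref i s s;
  pref_trans : forall i, player n i -> forall s t u,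
      pref i s t -> pref i t u -> pref i s u;
  pref_total : forall i, player n i -> forall s t,
      s <> t -> pref i s t \/ pref i t s
}.

Inductive oterm : Type :=
| TVar (x : nat)
| TO.

Inductive oform : Type :=
| OC (a : oterm)
| OGe (i : nat) (c a b : oterm)           (* a >=^i_c b *)
| ONeg (f : oform)
| OAnd (f g : oform)
| OEx (x : nat) (f : oform).

Definition term_free (a : oterm) (x : nat) : Prop :=
  match a with TVar y => y = x | TO => False end.

Fixpoint ofree (f : oform) (x : nat) : Prop :=
  match f with
  | OC a => term_free a x
  | OGe _ c a b => term_free c x \/ term_free a x \/ term_free b x
  | ONeg g => ofree g x
  | OAnd g h => ofree g x \/ ofree h x
  | OEx y g => y <> x /\ ofree g x
  end.

Definition oclosed (f : oform) : Prop := forall x, ~ ofree f x.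

Fixpoint only_player (i : nat) (f : oform) : Prop :=
  match f with
  | OC _ => True
  | OGe j _ _ _ => j = i
  | ONeg g => only_player i g
  | OAnd g h => only_player i g /\ only_player i h
  | OEx _ g => only_player i g
  end.

Definition opt_cond (i : nat) (f : oform) : Prop := oclosed f /\ only_player i f.

(* every occurrence of C(.) lies under an even number of negations;
   pol = true means "even so far" *)
Fixpoint opos (pol : bool) (f : oform) : Prop :=
  match f with
  | OC _ => pol = true
  | OGe _ _ _ _ => True
  | ONeg g => opos (negb pol) g
  | OAnd g h => opos pol g /\ opos pol h
  | OEx _ g => opos pol g
  end.

Definition positive_cond (f : oform) : Prop := opos true f.

Inductive nform : Type :=
| Rat (i : nat) (phi : oform)
| XVar
| NAnd (a b : nform)
| NNeg (a : nform)
| NBox (i : nat) (a : nform)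
| NO (i : nat) (phi : oform) (a : nform)
| Nu (a : nform).

Fixpoint nu_free (a : nform) : Prop :=
  match a with
  | Rat _ _ | XVar => True
  | NAnd b c => nu_free b /\ nu_free c
  | NNeg b => nu_free b
  | NBox _ b => nu_free b
  | NO _ _ b => nu_free b
  | Nu _ => False
  end.

Fixpoint wf (n : nat) (a : nform) : Prop :=
  match a with
  | Rat i phi => player n i /\ opt_cond i phi
  | XVar => True
  | NAnd b c => wf n b /\ wf n c
  | NNeg b => wf n b
  | NBox i b => player n i /\ wf n b
  | NO i phi b => player n i /\ opt_cond i phi /\ wf n b
  | Nu b => nu_free b /\ wf n b
  end.

(* free occurrence of X (X is bound by nu) *)
Fixpoint hasX (a : nform) : Prop :=
  match a with
  | Rat _ _ => False
  | XVar => True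
  | NAnd b c => hasX b \/ hasX c
  | NNeg b => hasX b
  | NBox _ b => hasX b
  | NO _ _ b => hasX b
  | Nu _ => False
  end.

Fixpoint posX (pol : bool) (a : nform) : Prop :=
  match a with
  | Rat _ _ => True
  | XVar => pol = true
  | NAnd b c => posX pol b /\ posX pol c
  | NNeg b => posX (negb pol) b
  | NBox _ b => posX pol b
  | NO _ phi b => posX pol b /\ (hasX b -> positive_cond phi)
  | Nu _ => True
  end.

Definition positive_in_X (a : nform) : Prop := posX true a.

Fixpoint substX (a c : nform) : nform :=
  match a with
  | Rat i phi => Rat i phi
  | XVar => c
  | NAnd b d => NAnd (substX b c) (substX d c)
  | NNeg b => NNeg (substX b c)
  | NBox i b => NBox i (substX b c)
  | NO i phi b => NO i phi (substX b c)
  | Nu b => Nu b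
  end.

Definition NImp (a b : nform) : nform := NNeg (NAnd a (NNeg b)).

(* propositional tautologies: true under every valuation of the
   non-propositional subformulas *)
Fixpoint peval (v : nform -> bool) (a : nform) : bool :=
  match a with
  | NAnd b c => peval v b && peval v c
  | NNeg b => negb (peval v b)
  | _ => v a
  end.

Definition tautology (a : nform) : Prop := forall v, peval v a = true.

Definition ntop : nform := NNeg (NAnd XVar (NNeg XVar)).

Fixpoint bigand (l : list nform) : nform :=
  match l with
  | [] => ntop
  | [a] => a
  | a :: l' => NAnd a (bigand l')
  end.

Definition players (n : nat) : list nat := seq 1 n.

Definition rat_all (n : nat) (phi : nat -> oform) : nform :=
  bigand (map (fun i => Rat i (phi i)) (players n)).

Definition box_all (n : nat) (a : nform) : nform :=
  bigand (map (fun i => NBox i a) (players n)).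

Definition O_all (n : nat) (phi : nat -> oform) (a : nform) : nform :=
  bigand (map (fun i => NO i (phi i) a) (players n)).

Definition boxstar (n : nat) (a : nform) : nform :=
  Nu (box_all n (NAnd XVar a)).

Definition pos_conds (n : nat) (phi : nat -> oform) : Prop :=
  forall i, player n i -> opt_cond i (phi i) /\ positive_cond (phi i).

Inductive provable (n : nat) : nform -> Prop :=
| P_taut : forall a, wf n a -> tautology a -> provable n a
| P_mp : forall a b, provable n a -> provable n (NImp a b) -> provable n b
| P_ratDis : forall phi c, pos_conds n phi -> wf n c ->
    provable n (NImp (rat_all n phi) (NImp (box_all n c) (O_all n phi c)))
| P_nuDis : forall a, wf n (Nu a) -> positive_in_X a ->
    provable n (NImp (Nu a) (substX a (Nu a)))
| P_nuInd : forall a c, wf n (Nu a) -> positive_in_X a ->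
    provable n (NImp c (substX a c)) -> provable n (NImp c (Nu a)).

(* With [chi := □*rat ∧ rat], the unfolding axiom gives [□*rat → □chi], and
   [rat∧□chi → O chi] is an instance of ratDis; hence [chi → (O X)[X ↦ chi]],
   and the induction rule yields [chi → νX. O X]. For [n = 0] all big
   conjunctions are the constant [ntop] and the formula is a tautology. *)
From Stdlib Require Import List Lia.
Import ListNotations.

Ltac solve_tautology :=
  let v := fresh "v" in
  intro v; unfold NImp; cbn [peval];
  repeat match goal with |- context[peval v ?x] => destruct (peval v x) end;
  repeat match goal with |- context[v ?x] => destruct (v x) end;
  reflexivity.

Lemma bigand_ind (P : nform -> Prop) :
  (forall a b, P a -> P b -> P (NAnd a b)) ->
  forall l, l <> [] -> Forall P l -> P (bigand l).
Proof.
  intros HAnd l; induction l as [|a [|b l] IH]; intros Hne Hl; [congruence| |].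
  - now inversion Hl.
  - inversion Hl; subst. apply HAnd; [assumption|]. apply IH; [congruence|assumption].
Qed.

Lemma substX_bigand l c :
  l <> [] -> substX (bigand l) c = bigand (map (fun a => substX a c) l).
Proof.
  induction l as [|a [|b l] IH]; intros Hne; [congruence|reflexivity|].
  change (NAnd (substX a c) (substX (bigand (b :: l)) c) =
          bigand (substX a c :: map (fun x => substX x c) (b :: l))).
  rewrite IH by congruence. reflexivity.
Qed.

Lemma substX_noX a c : ~ hasX a -> substX a c = a.
Proof. induction a; cbn; intros HX; f_equal; tauto. Qed.

Lemma posX_noX a pol : ~ hasX a -> posX pol a.
Proof. revert pol; induction a; cbn; intros pol HX; firstorder. Qed.

Lemma provable_mp2 n a b c :
  provable n a -> provable n b -> wf n (NImp a (NImp b c)) ->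
  tautology (NImp a (NImp b c)) -> provable n c.
Proof.
  intros Ha Hb Hw Ht.
  apply (P_mp n b); [exact Hb|]. apply (P_mp n a); [exact Ha|].
  now apply P_taut.
Qed.

Section PlayerConjunctions.

Variable n : nat.
Hypothesis n_pos : 1 <= n.

Lemma players_nonempty (f : nat -> nform) : map f (players n) <> [].
Proof. destruct n as [|m]; [lia|]. discriminate. Qed.

Lemma bigand_players_ind (P : nform -> Prop) (f : nat -> nform) :
  (forall a b, P a -> P b -> P (NAnd a b)) ->
  (forall i, player n i -> P (f i)) -> P (bigand (map f (players n))).
Proof.
  intros HAnd Hf. apply bigand_ind; [exact HAnd|apply players_nonempty|].
  apply Forall_map, Forall_forall. intros i Hi.
  apply Hf. unfold players in Hi. apply in_seq in Hi. unfold player. lia.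
Qed.

Lemma substX_bigand_players (f : nat -> nform) c :
  substX (bigand (map f (players n))) c =
  bigand (map (fun i => substX (f i) c) (players n)).
Proof. rewrite substX_bigand by apply players_nonempty. now rewrite map_map. Qed.

Variable phi : nat -> oform.
Hypothesis phi_pos : pos_conds n phi.

Lemma wf_rat_all : wf n (rat_all n phi).
Proof.
  apply (bigand_players_ind (wf n)); [now split|].
  intros i Hi. split; [exact Hi|apply phi_pos, Hi].
Qed.

Lemma nu_free_rat_all : nu_free (rat_all n phi).
Proof. now apply (bigand_players_ind nu_free). Qed.

Lemma noX_rat_all : ~ hasX (rat_all n phi).
Proof. apply (bigand_players_ind (fun a => ~ hasX a)); cbn; tauto. Qed.

Lemma wf_O_all c : wf n c -> wf n (O_all n phi c).
Proof.
  intros Hc. apply (bigand_players_ind (wf n)); [now split|].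
  intros i Hi. split; [exact Hi|]. split; [apply phi_pos, Hi|exact Hc].
Qed.

Lemma wf_box_all a : wf n a -> wf n (box_all n a).
Proof. intros Ha. apply (bigand_players_ind (wf n)); [now split|]. now split. Qed.

Lemma wf_boxstar a : wf n a -> nu_free a -> wf n (boxstar n a).
Proof.
  intros Hwf Hnu. split; [apply (bigand_players_ind nu_free); cbn; tauto|].
  apply wf_box_all. now split.
Qed.

Lemma wf_nu_O_all : wf n (Nu (O_all n phi XVar)).
Proof. split; [now apply (bigand_players_ind nu_free)|]. now apply wf_O_all. Qed.

Lemma boxstar_unfold a :
  wf n a -> nu_free a -> ~ hasX a ->
  provable n (NImp (boxstar n a) (box_all n (NAnd (boxstar n a) a))).
Proof.
  intros Hwf Hnu HX.
  assert (Hsubst : forall c, substX (box_all n (NAnd XVar a)) c = box_all n (NAnd c a)).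
  { intros c. unfold box_all. rewrite substX_bigand_players. cbn.
    now rewrite substX_noX. }
  rewrite <- Hsubst. apply P_nuDis; [now apply wf_boxstar|].
  apply (bigand_players_ind (posX true)); [now split|].
  intros i _. split; [reflexivity|]. now apply posX_noX.
Qed.

Lemma O_all_induction c :
  provable n (NImp c (O_all n phi c)) -> provable n (NImp c (Nu (O_all n phi XVar))).
Proof.
  intros Hc. apply P_nuInd; [apply wf_nu_O_all| |].
  - apply (bigand_players_ind (posX true)); [now split|].
    intros i Hi. split; [reflexivity|]. intros _. apply phi_pos, Hi.
  - unfold O_all. now rewrite substX_bigand_players.
Qed.

Lemma boxstar_rat_nu :
  provable n (NImp (NAnd (boxstar n (rat_all n phi)) (rat_all n phi)) (Nu (O_all n phi XVar))).
Proof.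
  set (chi := NAnd (boxstar n (rat_all n phi)) (rat_all n phi)).
  assert (Hwf_chi : wf n chi).
  { split; [|apply wf_rat_all].
    apply wf_boxstar; [apply wf_rat_all|apply nu_free_rat_all]. }
  apply O_all_induction.
  apply provable_mp2 with (a := NImp (boxstar n (rat_all n phi)) (box_all n chi))
                          (b := NImp (rat_all n phi) (NImp (box_all n chi) (O_all n phi chi))).
  - apply boxstar_unfold; [apply wf_rat_all|apply nu_free_rat_all|apply noX_rat_all].
  - now apply P_ratDis.
  - pose proof wf_rat_all. pose proof (wf_box_all chi Hwf_chi).
    pose proof (wf_O_all chi Hwf_chi). cbn in *. tauto.
  - subst chi. solve_tautology.
Qed.

End PlayerConjunctions.

Theorem theorem1 (n : nat) (G : game n) (phi : nat -> oform) :
  pos_conds n phi ->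
  provable n
    (NImp (NAnd (rat_all n phi) (boxstar n (rat_all n phi)))
          (Nu (O_all n phi XVar))).
Proof.
  intros Hphi.
  destruct n as [|m].
  { apply P_taut; [cbn; tauto|]. intros v; cbn. now destruct (v XVar), (v (Nu ntop)). }
  assert (Hn : 1 <= S m) by lia.
  apply (P_mp _ _ _ (boxstar_rat_nu _ Hn _ Hphi)).
  apply P_taut; [|solve_tautology].
  pose proof (wf_rat_all _ Hn _ Hphi).
  pose proof (wf_boxstar _ Hn _ (wf_rat_all _ Hn _ Hphi) (nu_free_rat_all _ Hn phi)).
  pose proof (wf_nu_O_all _ Hn _ Hphi).
  cbn in *. tauto.
Qed.
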